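(* Let $f_1,\dots,f_m\in\mathbb{C}[x_1,\dots,x_n]$, fix an index $k\in\{1,\dots,n\}$, and let $f_{m+1}=x_k-u_0$, where $u_0$ is an extra variable treated as a parameter. Let $B$ be a finite favourable set of monomials in $x_1,\dots,x_n$ with associated monomial-multiple sets $T_1,\dots,T_{m+1}$ and coefficient matrix $\mathbf{C}(u_0)$ (as defined in the context). Partition $B=B_1\sqcup B_2$ in one of the two ways (a) $B_1=B\cap T_{m+1}$, or (b) $B_1=\{\mathbf{x}^{\alpha}\in B \mid \mathbf{x}^{\alpha}/x_k\in T_{m+1}\}$, with $B_2=B\setminus B_1$. Order the columns of $\mathbf{C}(u_0)$ so that those indexed by $B_1$ (vector $\mathbf{b}_1$) come first, followed by those indexed by $B_2$ (vector $\mathbf{b}_2$), and order the rows so that the rows coming from $f_1,\dots,f_m$ (upper block) precede the rows coming from $f_{m+1}$ (lower block). This gives a block partition $$\mathbf{C}(u_0)\begin{bmatrix}\mathbf{b}_1\\ \mathbf{b}_2\end{bmatrix}=\begin{bmatrix}\mathbf{C}_{11}&\mathbf{C}_{12}\\ \mathbf{C}_{21}&\mathbf{C}_{22}\end{bmatrix}\begin{bmatrix}\mathbf{b}_1\\ \mathbf{b}_2\end{bmatrix}.$$ If $\mathbf{C}_{12}$ has full column rank, then the resultant matrix constraint $\mathbf{M}(u_0)\mathbf{b}=\mathbf{0}$ can be converted into an eigenvalue problem: rows may be deleted from the upper block to obtain a square matrix $\mathbf{M}(u_0)$ whose upper-right block $\hat{\mathbf{A}}_{12}$ is square and invertible, and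 there is a square matrix $\mathbf{X}$ whose entries are functions of the coefficients of $f_1,\dots,f_m$ (and do not depend on $u_0$) such that every vector $\mathbf{b}=(\mathbf{b}_1,\mathbf{b}_2)$ with $\mathbf{M}(u_0)\mathbf{b}=\mathbf{0}$ satisfies $\mathbf{X}\mathbf{b}_1=u_0\mathbf{b}_1$ in case (a), and $\mathbf{X}\mathbf{b}_1=-\frac{1}{u_0}\mathbf{b}_1$ (for $u_0\neq 0$) in case (b).
   Context: For a finite set $B$ of monomials in $x_1,\dots,x_n$ and $i=1,\dots,m+1$, let $T_i$ be the set of all monomials $t$ such that every monomial occurring in $t f_i$ lies in $B$ (for $f_{m+1}=x_k-u_0$, $u_0$ is treated as a coefficient, so this means $t x_k\in B$ and $t\in B$). It is assumed that $B$ equals the set of monomials occurring in the extended system $\{t f_i : t\in T_i,\ i=1,\dots,m+1\}$. The coefficient matrix $\mathbf{C}(u_0)$ has one row for each pair $(i,t)$ with $t\in T_i$ and one column for each monomial of $B$; the entry is the coefficient of that monomial in $t f_i$ (so entries are affine in $u_0$). $B$ is called favourable if $\sum_{j=1}^{m+1}|T_j|\ge |B|$, $\min_j |T_j|>0$, and $\mathbf{C}(u_0)$ has column rank $|B|$ for a random value of $u_0$. The resultant matrix constraint is $\mathbf{M}(u_0)\mathbf{b}=\mathbf{0}$, where $\mathbf{M}(u_0)$ is a square matrix obtained from $\mathbf{C}(u_0)$ by deleting rows and $\mathbf{b}$ is the vector of monomials of $B$ in the chosen order. *)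

From mathcomp Require Import all_boot all_algebra.
From mathcomp Require Import finmap mpoly.
From mathcomp.real_closed Require Import complex.
From mathcomp Require Import Rstruct.

Set Implicit Arguments.
Unset Strict Implicit.
Unset Printing Implicit Defensive.

Import GRing.Theory.
Local Open Scope ring_scope.
Local Open Scope fset_scope.

Definition CC : numClosedFieldType := complex.complex Rdefinitions.R.

Section Resultant.
Variables (n m : nat).
Local Notation mono := ('X_{1..n}).
Local Notation poly := ({mpoly CC[n]}).

(* T_i for a polynomial p (one of f_1..f_m): all monomials t such that every
   monomial occurring in t*p lies in B.  Any such t is of the form b - s with
   b in B and s in the support of p (when p <> 0), so we search among these
   candidates (for p = 0 this gives the empty set). *)
Definition Tset (B : {fset mono}) (p : poly) : {fset mono} :=
  seq_fset tt
    [seq t <- [seq (b - s)%MM | b <- enum_fset B, s <- msupp p]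
       | all (fun c => c \in B) (msupp ('X_[t] * p))].

(* T_{m+1} for f_{m+1} = x_k - u0 : t in B and t*x_k in B. *)
Definition Tlast (B : {fset mono}) (k : 'I_n) : {fset mono} :=
  [fset t in B | (t + U_(k))%MM \in B].

Definition urows (f : 'I_m -> poly) (B : {fset mono}) : seq (poly * mono) :=
  flatten [seq [seq (f i, t) | t <- enum_fset (Tset B (f i))] | i <- enum 'I_m].

Definition elt (A : {fset mono}) (j : nat) : mono := nth 0%MM (enum_fset A) j.

Definition up_entry (r : poly * mono) (c : mono) : CC := ('X_[r.2] * r.1)@_c.

(* entry of the row t*(x_k - u0) at column c *)
Definition low_entry (k : 'I_n) (u0 : CC) (t c : mono) : CC :=
  (c == (t + U_(k))%MM)%:R - u0 * (c == t)%:R.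

Definition Cup (f : 'I_m -> poly) (B A : {fset mono}) :
  'M[CC]_(size (urows f B), #|` A|) :=
  \matrix_(i, j) up_entry (nth (0, 0%MM) (urows f B) i) (elt A j).

Definition Clow (k : 'I_n) (B : {fset mono}) (u0 : CC) (A : {fset mono}) :
  'M[CC]_(#|` Tlast B k|, #|` A|) :=
  \matrix_(i, j) low_entry k u0 (elt (Tlast B k) i) (elt A j).

Definition Cmat (f : 'I_m -> poly) (k : 'I_n) (B : {fset mono}) (u0 : CC) :=
  col_mx (Cup f B B) (Clow k B u0 B).

Definition ext_monomials (f : 'I_m -> poly) (k : 'I_n) (B : {fset mono}) :
  seq mono :=
  flatten [seq msupp ('X_[r.2] * r.1) | r <- urows f B]
  ++ flatten [seq [:: (t + U_(k))%MM; t] | t <- enum_fset (Tlast B k)].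

Definition B_is_ext_support f k B : Prop :=
  forall c, (c \in B) = (c \in ext_monomials f k B).

(* favourable: sum |T_j| >= |B|, min |T_j| > 0, and C(u0) has column rank |B|
   for a generic (i.e. some) value of u0. *)
Definition favourable (f : 'I_m -> poly) (k : 'I_n) (B : {fset mono}) : Prop :=
  [/\ (#|` B| <= \sum_(i < m) #|` Tset B (f i)| + #|` Tlast B k|)%N,
      (forall i, 0 < #|` Tset B (f i)|)%N,
      (0 < #|` Tlast B k|)%N &
      exists u0 : CC, \rank (Cmat f k B u0) = #|` B| ].

Definition B1a (k : 'I_n) (B : {fset mono}) : {fset mono} := B `&` Tlast B k.
Definition B1b (k : 'I_n) (B : {fset mono}) : {fset mono} :=
  [fset a in B | (0 < a k)%N && ((a - U_(k))%MM \in Tlast B k)].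

Definition Mmat (f : 'I_m -> poly) (k : 'I_n) (B B1 : {fset mono})
  (s : 'I_#|` B `\` B1| -> 'I_(size (urows f B))) (u0 : CC) :=
  block_mx (rowsub s (Cup f B B1)) (rowsub s (Cup f B (B `\` B1)))
           (Clow k B u0 B1) (Clow k B u0 (B `\` B1)).

Definition eigen_conversion (f : 'I_m -> poly) (k : 'I_n) (B B1 : {fset mono})
  (lam : CC -> CC) (dom : CC -> Prop) : Prop :=
  let B2 := B `\` B1 in
  [/\ #|` Tlast B k| = #|` B1|,
      (exists s : 'I_#|` B2| -> 'I_(size (urows f B)),
          injective s /\ rowsub s (Cup f B B2) \in unitmx) &
      forall s : 'I_#|` B2| -> 'I_(size (urows f B)),
        injective s -> rowsub s (Cup f B B2) \in unitmx ->
        exists X : 'M[CC]_#|` B1|,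
          forall u0 : CC, dom u0 ->
          forall (b1 : 'cV[CC]_#|` B1|) (b2 : 'cV[CC]_#|` B2|),
            @Mmat f k B B1 s u0 *m col_mx b1 b2 = 0 ->
            X *m b1 = lam u0 *: b1].

End Resultant.
Arguments Tset {n}.
Arguments Tlast {n}.
Arguments urows {n m}.
Arguments Cup {n m}.
Arguments Clow {n}.
Arguments Cmat {n m}.
Arguments B_is_ext_support {n m}.
Arguments favourable {n m}.
Arguments B1a {n}.
Arguments B1b {n}.
Arguments Mmat {n m}.
Arguments eigen_conversion {n m}.

From mathcomp Require Import all_boot all_algebra.
From mathcomp Require Import finmap mpoly.

(* The lower rows of C(u0) are x_k t - u0 t for t in T_{m+1}, so the lower
   block is S - u0 J for the 0/1 matrices S, J of the maps t |-> x_k t and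
   t |-> t.  Since the upper-right block A12 of M(u0) is invertible, b2 can be
   eliminated: b2 = - K b1 with K = A12^-1 A11, which does not involve u0,
   and b1 lies in the kernel of the Schur complement C21 - C22 K.
   (a) If B1 = T_{m+1}, then J is the identity on B1 and vanishes on B2, so
       the Schur complement is X - u0 with X = S1 - S2 K.
   (b) If B1 = x_k T_{m+1}, then S vanishes on B2 and is a permutation matrix
       P on B1, so the Schur complement is P - u0 Y with Y = J1 - J2 K, and
       X = - P^T Y satisfies X b1 = - u0^-1 P^T P b1 = - u0^-1 b1. *)

Import GRing.Theory.
Local Open Scope ring_scope.
Local Open Scope fset_scope.

Lemma schur_complement_kernel (R : comUnitRingType) (p q r : nat)
    (A11 : 'M[R]_(q, p)) (A12 : 'M[R]_q) (A21 : 'M[R]_(r, p))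
    (A22 : 'M[R]_(r, q)) (b1 : 'cV[R]_p) (b2 : 'cV[R]_q) :
  A12 \in unitmx -> block_mx A11 A12 A21 A22 *m col_mx b1 b2 = 0 ->
  (A21 - A22 *m (invmx A12 *m A11)) *m b1 = 0.
Proof.
move=> A12_unit /eqP; rewrite mul_block_col col_mx_eq0.
move=> /andP[/eqP up /eqP low].
have b2E : invmx A12 *m A11 *m b1 = - b2.
  move/eqP: up; rewrite addrC addr_eq0 => /eqP A12b2E.
  by rewrite -mulmxA -[A11 *m b1]opprK -A12b2E mulmxN mulKmx.
by rewrite mulmxBl -mulmxA b2E mulmxN opprK.
Qed.

Lemma row_full_rowsub_unitmx (F : fieldType) (p q : nat) (A : 'M[F]_(p, q)) :
  row_full A -> exists s : 'I_q -> 'I_p, injective s /\ rowsub s A \in unitmx.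
Proof.
move=> fullA; exists (fullrankfun fullA).
by split; [exact: fullrankfun_inj | exact: fullrowsub_unit].
Qed.

Section GraphMatrix.
Variables (n : nat) (R : pzSemiRingType).
Local Notation mono := 'X_{1..n}.

Lemma mem_elt {A : {fset mono}} (j : 'I_#|` A|) : elt A j \in A.
Proof. by rewrite /elt mem_nth. Qed.

Lemma eq_elt (A : {fset mono}) (i j : 'I_#|` A|) :
  (elt A i == elt A j) = (i == j).
Proof. by rewrite /elt nth_uniq ?fset_uniq. Qed.

Lemma elt_onto {A : {fset mono}} {a : mono} :
  a \in A -> exists j : 'I_#|` A|, elt A j = a.
Proof.
move=> aA; exists (Ordinal (etrans (index_mem _ _) aA)).
by rewrite /elt nth_index.
Qed.

Definition graph_mx (g : mono -> mono) (T A : {fset mono}) :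
  'M[R]_(#|` T|, #|` A|) :=
  \matrix_(i, j) (elt A j == g (elt T i))%:R.

Lemma graph_mx_id (T : {fset mono}) : graph_mx id T T = 1%:M.
Proof. by apply/matrixP => i j; rewrite !mxE eq_elt eq_sym. Qed.

Lemma graph_mx_eq0 (g : mono -> mono) (T A : {fset mono}) :
  {in T, forall t, g t \notin A} -> graph_mx g T A = 0.
Proof.
move=> gTA; apply/matrixP => i j; rewrite !mxE.
case: eqP => // ajE; have := mem_elt j.
by rewrite ajE (negPf (gTA _ (mem_elt i))).
Qed.

Lemma tr_graph_mx_mul (g : mono -> mono) (T A : {fset mono}) :
  injective g -> {subset A <= g @` T} ->
  (graph_mx g T A)^T *m graph_mx g T A = 1%:M.
Proof.
move=> g_inj sAgT; apply/matrixP => j j'; rewrite !mxE.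
have /imfsetP[t /= tT ajE] := sAgT _ (mem_elt j).
have [i0 ti0] := elt_onto tT; rewrite -{}ti0 in ajE.
rewrite (bigD1 i0) //= big1 => [|i i_neq_i0]; rewrite !mxE.
  by rewrite -ajE eqxx mul1r addr0 eq_elt eq_sym.
by rewrite ajE (inj_eq g_inj) eq_elt eq_sym (negPf i_neq_i0) mul0r.
Qed.

End GraphMatrix.

Arguments graph_mx {n R}.

Section LowerBlock.
Variables (n : nat) (k : 'I_n) (B : {fset 'X_{1..n}}).
Local Notation T := (Tlast B k).
Local Notation mulxk := (fun t : 'X_{1..n} => (t + U_(k))%MM).

Lemma ClowE (u0 : CC) (A : {fset 'X_{1..n}}) :
  Clow k B u0 A = graph_mx mulxk T A - u0 *: graph_mx id T A.
Proof. by apply/matrixP => i j; rewrite !mxE. Qed.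

Lemma B1aE : B1a k B = T.
Proof. by apply/fsetIidPr/fsubsetP => t; rewrite inE => /andP[]. Qed.

Lemma B1bE : B1b k B = [fset mulxk t | t in T].
Proof.
apply/fsetP => a; rewrite inE; apply/andP/imfsetP => [[_ /andP[ak_gt0 aT]]|].
  exists (a - U_(k))%MM => //; rewrite submK //.
  by apply/mnm_lepP => i; rewrite mnm1E; case: eqP => // <-.
move=> [t /= tT ->]; split; last by rewrite addmK mnmDE mnm1E eqxx addn1 tT.
by move: tT; rewrite inE => /andP[].
Qed.

Lemma card_B1b : #|` B1b k B| = #|` T|.
Proof. by rewrite B1bE card_imfset //; exact: addIm. Qed.

End LowerBlock.

Section EigenConversion.
Variables (n m : nat) (f : 'I_m -> {mpoly CC[n]}) (k : 'I_n).
Variable B : {fset 'X_{1..n}}.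
Local Notation T := (Tlast B k).
Local Notation mulxk := (fun t : 'X_{1..n} => (t + U_(k))%MM).

Lemma eigen_conversion_schur (B1 : {fset 'X_{1..n}}) (lam : CC -> CC)
    (dom : CC -> Prop) :
  #|` T| = #|` B1| ->
  \rank (Cup f B (B `\` B1)) = #|` B `\` B1| ->
  (forall K : 'M[CC]_(#|` B `\` B1|, #|` B1|),
     exists X : 'M[CC]_#|` B1|, forall u0, dom u0 -> forall b1 : 'cV_#|` B1|,
       (Clow k B u0 B1 - Clow k B u0 (B `\` B1) *m K) *m b1 = 0 ->
       X *m b1 = lam u0 *: b1) ->
  eigen_conversion f k B B1 lam dom.
Proof.
move=> cardT rank2 schur_eigen; split=> //.
  by apply: row_full_rowsub_unitmx; rewrite /row_full rank2.
move=> s _ A12_unit.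
have [X XP] := schur_eigen (invmx (rowsub s (Cup f B (B `\` B1))) *m
                            rowsub s (Cup f B B1)).
exists X => u0 dom_u0 b1 b2 Mb0; apply: XP => //.
exact: schur_complement_kernel Mb0.
Qed.

Lemma eigen_conversion_B1a :
  \rank (Cup f B (B `\` B1a k B)) = #|` B `\` B1a k B| ->
  eigen_conversion f k B (B1a k B) (fun u0 => u0) (fun _ => True).
Proof.
rewrite B1aE => rank2; apply: eigen_conversion_schur => // K.
exists (graph_mx mulxk T T - graph_mx mulxk T (B `\` T) *m K) => u0 _ b1.
have J2_eq0 : graph_mx id T (B `\` T) = 0 :> 'M[CC]_(_, _).
  by apply: graph_mx_eq0 => t tT; rewrite in_fsetD tT.
rewrite !ClowE graph_mx_id J2_eq0 scaler0 subr0 addrAC mulmxBl scalemx1.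
by rewrite mul_scalar_mx => /eqP; rewrite subr_eq0 => /eqP.
Qed.

Lemma eigen_conversion_B1b :
  \rank (Cup f B (B `\` B1b k B)) = #|` B `\` B1b k B| ->
  eigen_conversion f k B (B1b k B) (fun u0 => - u0^-1) (fun u0 => u0 != 0).
Proof.
move=> rank2; apply: eigen_conversion_schur; rewrite ?card_B1b // => K.
pose P : 'M[CC]_(_, _) := graph_mx mulxk T (B1b k B).
pose Y : 'M[CC]_(_, _) :=
  graph_mx id T (B1b k B) - graph_mx id T (B `\` B1b k B) *m K.
exists (- (P^T *m Y)) => u0 u0_neq0 b1.
have PtP : P^T *m P = 1%:M.
  by apply: tr_graph_mx_mul; [exact: addIm | rewrite B1bE].
have S2_eq0 : graph_mx mulxk T (B `\` B1b k B) = 0 :> 'M[CC]_(_, _).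
  apply: graph_mx_eq0 => t tT; rewrite in_fsetD negb_and negbK B1bE.
  by apply/orP; left; apply/imfsetP; exists t.
rewrite !ClowE -/P S2_eq0 sub0r mulNmx -scalemxAl opprK -addrA.
rewrite -[u0 *: (_ *m K)]opprK -opprD.
rewrite (_ : u0 *: _ - _ = u0 *: Y); last by rewrite /Y scalerBr.
move=> /eqP; rewrite mulmxBl -scalemxAl subr_eq0 => /eqP PbE.
have YbE : Y *m b1 = u0^-1 *: (P *m b1) by rewrite PbE scalerA mulVf ?scale1r.
by rewrite mulNmx -mulmxA YbE -scalemxAr mulmxA PtP mul1mx scaleNr.
Qed.

End EigenConversion.

Theorem proposition1 (n m : nat) (f : 'I_m -> {mpoly CC[n]}) (k : 'I_n)
  (B : {fset 'X_{1..n}}) :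
  B_is_ext_support f k B ->
  favourable f k B ->
  (\rank (Cup f B (B `\` B1a k B)) = #|` B `\` B1a k B| ->
     eigen_conversion f k B (B1a k B) (fun u0 => u0) (fun _ => True)) /\
  (\rank (Cup f B (B `\` B1b k B)) = #|` B `\` B1b k B| ->
     eigen_conversion f k B (B1b k B) (fun u0 => - u0^-1) (fun u0 => u0 != 0)).
Proof.
move=> _ _.
by split; [exact: eigen_conversion_B1a | exact: eigen_conversion_B1b].
Qed.
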